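(* Let $G$ be a finite group with identity $e$, $R[G]$ its real group algebra, $S=\{x\in R[G]:\sum_gx_g=1,\ x_g\ge0\ \forall g\}$, and $x\in S$. Then (1) $n_{xc_x}\le m_x$; (2) if $n_{xc_x}=n_x$ then $n_x=m_x=m_{xc_x}$.
   Context: $\mathrm{Supp}(y)=\{g:y_g\ne0\}$, $\mathbb N=\{1,2,\dots\}$. For $y\in S$: $n_y=\min\{k\in\mathbb N:(y^k)_e\ne0\}$; $G_y$ is the subgroup generated by $\mathrm{Supp}(y^{n_y})$; $c_y=\frac1{|G_y|}\sum_{g\in G_y}g$; $m_y=\min\{k\in\mathbb N:\mathrm{Supp}(y^k)\subset G_y\}$. Note $xc_x\in S$. *)

From HB Require Import structures.
From mathcomp Require Import all_boot all_order all_algebra all_fingroup.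
From Stdlib Require Import ClassicalEpsilon.
Set Implicit Arguments. Unset Strict Implicit. Unset Printing Implicit Defensive.
Import Order.TTheory GRing.Theory Num.Theory.

Local Open Scope ring_scope.

Section GroupAlgebra.
Variables (gT : finGroupType) (R : realFieldType).

(* Elements of the real group algebra R[G], G = the whole finite group gT. *)
Definition galg := {ffun gT -> R}.

Definition gmul (x y : galg) : galg :=
  [ffun g => \sum_(h : gT) x h * y (h^-1 * g)%g].

Definition gone : galg := [ffun g => if g == 1%g then 1 else 0].

Definition gpow (y : galg) (k : nat) : galg := iter k (fun z => gmul z y) gone.

Definition Supp (y : galg) : {set gT} := [set g | y g != 0].

Definition inS (x : galg) : Prop :=
  \sum_(g : gT) x g = 1 /\ forall g, 0 <= x g.

(* least k : nat satisfying P, and 0 if there is none (never used in that case). *)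
Definition least (P : pred nat) : nat :=
  match excluded_middle_informative (exists n, P n) with
  | left h => ex_minn h
  | right _ => 0%N
  end.

Definition n_ (y : galg) : nat := least (fun k => (0 < k)%N && (gpow y k 1%g != 0)).

Definition G_ (y : galg) : {set gT} := <<Supp (gpow y (n_ y))>>%g.

Definition c_ (y : galg) : galg :=
  [ffun g => if g \in G_ y then (#|G_ y|%:R)^-1 else 0].

Definition m_ (y : galg) : nat := least (fun k => (0 < k)%N && (Supp (gpow y k) \subset G_ y)).

End GroupAlgebra.

From mathcomp Require Import all_boot all_order all_algebra all_fingroup.
From Stdlib Require Import ClassicalEpsilon.
Set Implicit Arguments. Unset Strict Implicit. Unset Printing Implicit Defensive.
Import Order.TTheory GRing.Theory Num.Theory.

(* For nonnegative x the support of a product is the product of supports, so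
   everything reduces to subsets of the group: with A = Supp x, Supp (x^k) = A^k,
   n_x is the least k > 0 with 1 in A^k, and G_x = <<A^(n_x)>> =: H.  Since
   A^(n_x) A = A A^(n_x), the elements h with hA inside AH form a subgroup
   containing A^(n_x), hence H A is inside A H; thus Supp ((x c_x)^k) = A^k H
   for k > 0.  If A^(m_x) lies in H then 1 is in A^(m_x) H, which gives
   n_(x c_x) <= m_x <= n_x; when equality holds, G_(x c_x) = <<A^(n_x) H>> = H,
   and A^k H lies in H exactly when A^k does, so m_(x c_x) = m_x. *)

Section ProductSets.
Variable gT : finGroupType.
Implicit Types (A B : {set gT}) (H : {group gT}).
Local Open Scope group_scope.

Lemma mem_expgs A a k : a \in A -> a ^+ k \in A ^+ k.
Proof.
by move=> Aa; elim: k => [|k IHk]; rewrite ?set11 // !expgSr mem_mulg.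
Qed.

Lemma expgs_neq0 A k : A != set0 -> A ^+ k != set0.
Proof. by case/set0Pn=> a Aa; apply/set0Pn; exists (a ^+ k); apply: mem_expgs. Qed.

Lemma gen_mul_subset A B : B * A \subset A * <<B>> -> <<B>> * A \subset A * <<B>>.
Proof.
move=> sBA_AB; set H := <<B>>.
pose K := [set h | [forall a in A, h * a \in A * H]].
have groupK : group_set K.
  apply/group_setP; split.
    by rewrite inE; apply/forall_inP=> a Aa; rewrite mul1g -[a]mulg1 mem_mulg.
  move=> h1 h2; rewrite !inE => /forall_inP Kh1 /forall_inP Kh2.
  apply/forall_inP=> a Aa; rewrite -mulgA.
  have /mulsgP[a1 k1 Aa1 Hk1 ->] := Kh2 a Aa; rewrite mulgA.
  have /mulsgP[a2 k2 Aa2 Hk2 ->] := Kh1 a1 Aa1.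
  by rewrite -mulgA mem_mulg ?groupM.
have sHK : H \subset Group groupK.
  rewrite gen_subG; apply/subsetP=> b Bb; rewrite inE.
  by apply/forall_inP=> a Aa; apply: (subsetP sBA_AB); rewrite mem_mulg.
apply/subsetP=> _ /mulsgP[h a Hh Aa ->].
by have := subsetP sHK h Hh; rewrite inE => /forall_inP->.
Qed.

Lemma gen_expgs_mul_subset A n : <<A ^+ n>> * A \subset A * <<A ^+ n>>.
Proof.
by apply: gen_mul_subset; rewrite -expgSr expgS mulgS ?subset_gen.
Qed.

Lemma expgs_mulG A H k :
  H * A \subset A * H -> (A * H) ^+ k.+1 = A ^+ k.+1 * H.
Proof.
move=> sHA_AH; have HAH : H * (A * H) = A * H.
  apply/eqP; rewrite eqEsubset mulg_subr ?group1 // andbT.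
  by rewrite mulgA (subset_trans (mulSg H sHA_AH)) // -mulgA mulGid.
elim: k => [|k IHk]; first by rewrite !expg1.
by rewrite expgSr IHk -mulgA HAH mulgA -expgSr.
Qed.

Lemma mulsG_subG B H : (B * H \subset H) = (B \subset H).
Proof.
apply/idP/idP=> [|sBH]; last by rewrite mul_subG.
by apply: subset_trans; rewrite mulg_subl ?group1.
Qed.

Lemma gen_mul_gen B : <<B * <<B>> >> = <<B>>.
Proof.
apply/eqP; rewrite eqEsubset gen_subG mul_subG ?subset_gen //=.
by rewrite genS // mulg_subl ?group1.
Qed.

Lemma one_in_mulsG B H : B :&: H != set0 -> 1 \in B * H.
Proof.
by case/set0Pn=> b /setIP[Bb Hb]; rewrite -(mulgV b) mem_mulg ?groupV.
Qed.

End ProductSets.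

Section Least.
Implicit Types P Q : pred nat.

Lemma leastP P k : P k -> P (least P).
Proof.
rewrite /least; case: excluded_middle_informative => [ex | noP] Pk.
  by case: ex_minnP.
by case: noP; exists k.
Qed.

Lemma least_le P k : P k -> (least P <= k)%N.
Proof.
rewrite /least; case: excluded_middle_informative => [ex | noP] Pk.
  by case: ex_minnP => n _; apply.
by case: noP; exists k.
Qed.

Lemma eq_least P Q : P =1 Q -> least P = least Q.
Proof.
move=> eqPQ; case: (excluded_middle_informative (exists k, P k)) => [[k Pk] | noP].
  have Qk : Q k by rewrite -eqPQ.
  by apply/eqP; rewrite eqn_leq !least_le ?eqPQ ?(leastP Qk) // -eqPQ (leastP Pk).
have noQ : ~ exists k, Q k by case=> k; rewrite -eqPQ => Pk; apply: noP; exists k.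
rewrite /least; do 2 case: excluded_middle_informative => //.
Qed.

End Least.

Section Support.
Variables (gT : finGroupType) (R : realFieldType).
Implicit Types y z : galg gT R.
Local Open Scope ring_scope.

Definition nonneg y := forall g, 0 <= y g.

Lemma nonneg_gmul y z : nonneg y -> nonneg z -> nonneg (gmul y z).
Proof.
by move=> y_ge0 z_ge0 g; rewrite ffunE sumr_ge0 // => h _; rewrite mulr_ge0.
Qed.

Lemma Supp_gmul y z :
  nonneg y -> nonneg z -> Supp (gmul y z) = (Supp y * Supp z)%g.
Proof.
move=> y_ge0 z_ge0; apply/setP=> g; rewrite inE ffunE; apply/idP/mulsgP.
  case: (pickP (fun h => y h * z (h^-1 * g)%g != 0)) => [h | yz0]; last first.
    by rewrite big1 ?eqxx // => h _; apply/eqP/negbFE/yz0.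
  rewrite mulf_eq0 negb_or => /andP[yh zh] _.
  by exists h (h^-1 * g)%g; rewrite ?inE ?mulKVg.
case=> h k; rewrite !inE => yh zk ->.
have yz_gt0 : 0 < y h * z (h^-1 * (h * k))%g.
  by rewrite mulKg mulr_gt0 // lt_def ?yh ?zk ?y_ge0 ?z_ge0.
rewrite (bigD1 h) //= gt_eqF // ltr_wpDr // sumr_ge0 // => i _.
by rewrite mulr_ge0.
Qed.

Lemma nonneg_gone : nonneg (gone gT R).
Proof. by move=> g; rewrite ffunE; case: eqP. Qed.

Lemma Supp_gone : Supp (gone gT R) = 1%g.
Proof.
apply/setP=> g; rewrite set1gE !inE ffunE.
by case: (g == 1%g); rewrite ?oner_eq0 ?eqxx.
Qed.

Lemma nonneg_gpow y k : nonneg y -> nonneg (gpow y k).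
Proof.
by move=> y_ge0; elim: k => [|k IHk]; [apply: nonneg_gone | apply: nonneg_gmul].
Qed.

Lemma Supp_gpow y k : nonneg y -> Supp (gpow y k) = (Supp y ^+ k)%g.
Proof.
move=> y_ge0; elim: k => [|k IHk]; first exact: Supp_gone.
rewrite expgSr -IHk /gpow iterS Supp_gmul //; exact: nonneg_gpow.
Qed.

Lemma inS_Supp_neq0 y : inS y -> Supp y != set0.
Proof.
case=> sum1 _; apply: contra_eqN sum1 => /eqP Supp0.
rewrite big1 1?eq_sym ?oner_eq0 // => g _.
by have := in_set0 g; rewrite -Supp0 inE => /negbFE/eqP.
Qed.

Lemma nonneg_c y : nonneg (c_ y).
Proof. by move=> g; rewrite ffunE; case: ifP; rewrite ?invr_ge0 ?ler0n. Qed.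

Lemma Supp_c y : Supp (c_ y) = G_ y.
Proof.
apply/setP=> g; rewrite inE ffunE; case: ifP; rewrite ?eqxx //.
by rewrite invr_eq0 pnatr_eq0 -lt0n cardG_gt0.
Qed.

End Support.

(* Built with [Group] so that [gval (G_group y)] is syntactically [G_ y]. *)
Canonical G_group gT R (y : galg gT R) : {group gT} :=
  Group (groupP <<_>>%G : group_set (G_ y)).

Section Indices.
Variables (gT : finGroupType) (R : realFieldType) (y : galg gT R).
Hypothesis y_ge0 : nonneg y.
Local Open Scope group_scope.

Lemma gpow_neq0_at1 k : (gpow y k 1 != 0%R) = (1 \in Supp y ^+ k).
Proof. by rewrite -Supp_gpow // inE. Qed.

Lemma n_le k : (0 < k)%N -> 1 \in Supp y ^+ k -> (n_ y <= k)%N.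
Proof. by move=> k_gt0 Sk1; apply: least_le; rewrite k_gt0 gpow_neq0_at1. Qed.

Lemma n_spec : Supp y != set0 -> (0 < n_ y)%N /\ 1 \in Supp y ^+ n_ y.
Proof.
case/set0Pn=> a Sa; rewrite -gpow_neq0_at1 /n_; set P := (X in least X).
apply/andP; apply: (leastP (P := P) (k := #[a])).
by rewrite /P order_gt0 gpow_neq0_at1 -(expg_order a) mem_expgs.
Qed.

Lemma G_E : G_ y = <<Supp y ^+ n_ y>>.
Proof. by rewrite /G_ Supp_gpow. Qed.

Lemma m_le k : (0 < k)%N -> Supp y ^+ k \subset G_ y -> (m_ y <= k)%N.
Proof. by move=> k_gt0 sSkG; apply: least_le; rewrite k_gt0 Supp_gpow. Qed.

Lemma m_le_n : Supp y != set0 -> (m_ y <= n_ y)%N.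
Proof. by case/n_spec=> n_gt0 _; apply: m_le; rewrite // G_E subset_gen. Qed.

Lemma m_spec : Supp y != set0 -> (0 < m_ y)%N /\ Supp y ^+ m_ y \subset G_ y.
Proof.
case/n_spec=> n_gt0 _; rewrite -Supp_gpow // /m_; set P := (X in least X).
by apply/andP; apply: (leastP (P := P) (k := n_ y)); rewrite /P n_gt0 subset_gen.
Qed.

End Indices.

Section ConvolutionWithAverage.
Variables (gT : finGroupType) (R : realFieldType) (x : galg gT R).
Hypotheses (x_ge0 : nonneg x) (Supp_x_neq0 : Supp x != set0).
Local Notation A := (Supp x).
Local Notation xc := (gmul x (c_ x)).
Local Open Scope group_scope.

Lemma nonneg_xc : nonneg xc.
Proof. exact: nonneg_gmul (nonneg_c x). Qed.

Lemma Supp_xc_expgs k : Supp xc ^+ k.+1 = A ^+ k.+1 * G_ x.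
Proof.
rewrite (Supp_gmul x_ge0 (nonneg_c x)) Supp_c expgs_mulG //= G_E //.
exact: gen_expgs_mul_subset.
Qed.

Lemma n_xc_le_m : (n_ xc <= m_ x)%N.
Proof.
have [m_gt0 sAmG] := m_spec x_ge0 Supp_x_neq0.
apply: (n_le nonneg_xc m_gt0); rewrite -(prednK m_gt0) Supp_xc_expgs prednK //.
by apply: one_in_mulsG; rewrite (setIidPl sAmG) expgs_neq0.
Qed.

Lemma G_xc : n_ xc = n_ x -> G_ xc = G_ x.
Proof.
move=> eq_n; have [n_gt0 _] := n_spec x_ge0 Supp_x_neq0.
rewrite (G_E nonneg_xc) eq_n -(prednK n_gt0) Supp_xc_expgs prednK //.
by rewrite G_E // gen_mul_gen.
Qed.

Lemma m_xc : n_ xc = n_ x -> m_ xc = m_ x.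
Proof.
move/G_xc=> eq_G; apply: eq_least => -[|k] //.
rewrite (Supp_gpow _ nonneg_xc) (Supp_gpow _ x_ge0) eq_G.
by rewrite Supp_xc_expgs mulsG_subG.
Qed.

End ConvolutionWithAverage.

Theorem proposition4 (gT : finGroupType) (R : realFieldType) (x : galg gT R) :
  inS x ->
  (n_ (gmul x (c_ x)) <= m_ x)%N /\
  (n_ (gmul x (c_ x)) = n_ x ->
     n_ x = m_ x /\ m_ x = m_ (gmul x (c_ x))).
Proof.
move=> Sx; have [_ x_ge0] := Sx; have Supp_x_neq0 := inS_Supp_neq0 Sx.
have le_n_m := n_xc_le_m x_ge0 Supp_x_neq0.
split=> // eq_n; rewrite m_xc //.
by split=> //; apply/eqP; rewrite eqn_leq m_le_n // andbT -eq_n.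
Qed.
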